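(* Let $\Omega\subset\mathbb{R}^2$ be an open domain and $z\in C^2(\Omega)$ a solution of $Az_{xx}+2Bz_{xy}+Cz_{yy}+z_{xx}z_{yy}-z_{xy}^2=E$, with $A,B,C,E\in C^2(\mathcal{U})$, $AC-B^2+E>0$ on $\mathcal{U}$, such that the closure of $\{(x,y,z,z_x,z_y)(x,y):(x,y)\in\Omega\}$ is a compact subset of $\mathcal{U}$. Let $\varepsilon\in\{-1,1\}$ be such that $\varepsilon\big((z_{xx}+C)dx^2+2(z_{xy}-B)dxdy+(z_{yy}+A)dy^2\big)$ is positive definite on $\Omega$. Then there exist constants $a,c>0$ such that the function $z^*(x,y)=z(x,y)+\frac{\varepsilon a}{2}x^2+\frac{\varepsilon c}{2}y^2$ has a locally strictly convex graph $\{(x,y,z^*(x,y))\}\subset\mathbb{R}^3$ (i.e. $\varepsilon D^2z^*$ is positive definite on $\Omega$).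
   Context: $\mathcal{U}\subset\mathbb{R}^5$ is open with coordinates $(x,y,z,p,q)$; coefficients are evaluated at $(x,y,z,z_x,z_y)$. The ellipticity $AC-B^2+E>0$ guarantees that the quadratic form above is definite, so such $\varepsilon$ exists (on connected $\Omega$). *)

From Stdlib Require Import Reals List.
From mathcomp Require Import ssreflect ssrfun ssrbool eqtype ssrnat fintype.
Open Scope R_scope.

Definition vec (n : nat) := 'I_n -> R.

Definition dist_lt {n} (x y : vec n) (d : R) : Prop :=
  forall i, Rabs (x i - y i) < d.

Definition open_in {n} (U : vec n -> Prop) : Prop :=
  forall x, U x -> exists d, 0 < d /\ forall y, dist_lt x y d -> U y.

Definition connected_in {n} (U : vec n -> Prop) : Prop :=
  forall V W : vec n -> Prop, open_in V -> open_in W ->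
    (forall x, U x -> V x \/ W x) ->
    (forall x, U x -> V x -> W x -> False) ->
    (exists x, U x /\ V x) -> (exists x, U x /\ W x) -> False.

Definition domain {n} (U : vec n -> Prop) : Prop :=
  open_in U /\ connected_in U /\ exists x, U x.

Definition closure_in {n} (S : vec n -> Prop) : vec n -> Prop :=
  fun x => forall d, 0 < d -> exists y, S y /\ dist_lt x y d.

Definition compact_in {n} (K : vec n -> Prop) : Prop :=
  forall (I : Type) (O : I -> vec n -> Prop),
    (forall i, open_in (O i)) ->
    (forall x, K x -> exists i, O i x) ->
    exists l : list I, forall x, K x -> exists i, In i l /\ O i x.

Definition continuous_in {n} (U : vec n -> Prop) (f : vec n -> R) : Prop :=
  forall x, U x -> forall eps, 0 < eps -> exists d, 0 < d /\
    forall y, dist_lt x y d -> Rabs (f y - f x) < eps.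

Definition shift {n} (x : vec n) (i : 'I_n) (h : R) : vec n :=
  fun j => if j == i then x j + h else x j.

Definition partial {n} (f : vec n -> R) (i : 'I_n) (x : vec n) (l : R) : Prop :=
  derivable_pt_lim (fun h => f (shift x i h)) 0 l.

Definition C2_on {n} (U : vec n -> Prop) (f : vec n -> R)
    (D1 : 'I_n -> vec n -> R) (D2 : 'I_n -> 'I_n -> vec n -> R) : Prop :=
  open_in U /\
  (forall x, U x -> forall i, partial f i x (D1 i x)) /\
  (forall x, U x -> forall i j, partial (D1 i) j x (D2 i j x)) /\
  continuous_in U f /\
  (forall i, continuous_in U (D1 i)) /\
  (forall i j, continuous_in U (D2 i j)).

Definition is_C2_on {n} (U : vec n -> Prop) (f : vec n -> R) : Prop :=
  exists D1 D2, C2_on U f D1 D2.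

Definition hessian_at {n} (f : vec n -> R) (x : vec n) (H : 'I_n -> 'I_n -> R) : Prop :=
  exists (G : 'I_n -> vec n -> R) (d : R), 0 < d /\
    (forall y, dist_lt x y d -> forall i, partial f i y (G i y)) /\
    (forall i j, partial (G i) j x (H i j)).

Definition ix : 'I_2 := @Ordinal 2 0 erefl.
Definition iy : 'I_2 := @Ordinal 2 1 erefl.

Definition mk5 (a b c d e : R) : vec 5 :=
  fun i => match nat_of_ord i with
           | 0%nat => a | 1%nat => b | 2%nat => c | 3%nat => d | _ => e end.

Definition qform2 (H : 'I_2 -> 'I_2 -> R) (u v : R) : R :=
  H ix ix * u * u + H ix iy * u * v + H iy ix * v * u + H iy iy * v * v.

(* Positive definiteness of eps (D^2 z + [[C, -B], [-B, A]]) along the 1-jet of z,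
   together with a bound M on |A|, |B|, |C| over the compact closure of that jet,
   gives eps D^2 z > -2M (dx^2 + dy^2) as quadratic forms; the mixed terms can be
   compared only because D^2 z is symmetric (Schwarz).  Adding
   eps (2M+1)/2 (x^2 + y^2) to z therefore makes eps D^2 z* positive definite. *)

From Pilot Require Import Defs.
From Stdlib Require Import Reals List Lra Psatz FunctionalExtensionality.
From mathcomp Require Import ssreflect ssrfun ssrbool eqtype ssrnat fintype.
From Coquelicot Require Import Coquelicot.
(* Coquelicot exports its own [domain]. *)
Import Pilot.Defs.
Open Scope R_scope.

Lemma dist_lt_refl {n} (x : vec n) {d} : 0 < d -> dist_lt x x d.
Proof. by move=> Hd i; rewrite Rminus_eq_0 Rabs_R0. Qed.

Lemma dist_lt_trans {n} {x y w : vec n} {d e} :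
  dist_lt x y d -> dist_lt y w e -> dist_lt x w (d + e).
Proof. move=> Hxy Hyw i; have := Hxy i; have := Hyw i; split_Rabs; lra. Qed.

Lemma dist_lt_le {n} {x y : vec n} {d} e : dist_lt x y d -> d <= e -> dist_lt x y e.
Proof. move=> Hxy Hde i; exact: Rlt_le_trans (Hxy i) Hde. Qed.

Lemma closure_in_self {n} (S : vec n -> Prop) x : S x -> closure_in S x.
Proof. by move=> Hx d Hd; exists x; split; last exact: dist_lt_refl. Qed.

Lemma INR_le_list_max {l k} : In k l -> INR k <= INR (list_max l).
Proof.
move=> Hk; apply: le_INR; have /list_max_le Hall := le_n (list_max l).
exact: proj1 (Forall_forall _ _) Hall k Hk.
Qed.

Lemma continuous_bounded_on_compact {n} {K U : vec n -> Prop} {f : vec n -> R} :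
  continuous_in U f -> compact_in K -> (forall P, K P -> U P) ->
  exists M, 0 <= M /\ forall P, K P -> Rabs (f P) <= M.
Proof.
move=> Hf HK HKU.
pose O k P := exists d, 0 < d /\ forall Q, dist_lt P Q d -> Rabs (f Q) < INR k.
case: (HK nat O) => [k P [d [Hd HP]] | P HP | l Hl].
- exists (d / 2); split => [|P' HP']; first lra.
  exists (d / 2); split => [|Q HQ]; first lra.
  by apply: HP; apply: dist_lt_le (dist_lt_trans HP' HQ) _; lra.
- case: (Hf P (HKU P HP) 1 Rlt_0_1) => d [Hd Hc].
  case: (INR_archimed 1 (Rabs (f P) + 1) Rlt_0_1) => k; rewrite Rmult_1_r => Hk.
  exists k, d; split => // Q HQ; have := Hc Q HQ; split_Rabs; lra.
- exists (INR (list_max l)); split => [|P HP]; first exact: pos_INR.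
  case: (Hl P HP) => k [Hin [d [Hd HPk]]].
  have := HPk P (dist_lt_refl P Hd); have := INR_le_list_max Hin; lra.
Qed.

Lemma is_C2_on_continuous {n} {U : vec n -> Prop} {f} : is_C2_on U f -> continuous_in U f.
Proof. by case=> D1 [D2 [_ [_ [_ [Hf _]]]]]. Qed.

Lemma ord2P (i : 'I_2) : i = ix \/ i = iy.
Proof. by case: i => [[|[|m]] Hm]; [left | right |]; try apply: val_inj. Qed.

Definition pt (a b : R) : vec 2 := fun j => if j == ix then a else b.

Lemma pt_eta (w : vec 2) : pt (w ix) (w iy) = w.
Proof. apply: functional_extensionality => j; by case: (ord2P j) => ->. Qed.

Lemma shift_pt_x a b h : shift (pt a b) ix h = pt (a + h) b.
Proof. apply: functional_extensionality => j; by case: (ord2P j) => ->. Qed.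

Lemma shift_pt_y a b h : shift (pt a b) iy h = pt a (b + h).
Proof. apply: functional_extensionality => j; by case: (ord2P j) => ->. Qed.

Lemma is_derive_shift_origin (g : R -> R) x l :
  is_derive (fun h => g (x + h)) 0 l -> is_derive g x l.
Proof.
move=> Hg; have Hc : is_derive (fun t => t - x) x 1 by auto_derive; try ring.
have := is_derive_comp (fun h => g (x + h)) (fun t => t - x) x l 1.
rewrite scal_one; have -> : x - x = 0 by ring.
move/(_ Hg Hc); apply: is_derive_ext => t; by have -> : x + (t - x) = t by ring.
Qed.

Lemma partial_pt_x (g : vec 2 -> R) a b l :
  partial g ix (pt a b) l -> is_derive (fun t => g (pt t b)) a l.
Proof.
move/is_derive_Reals => Hg; apply: is_derive_shift_origin.
by apply: is_derive_ext Hg => h; rewrite shift_pt_x.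
Qed.

Lemma partial_pt_y (g : vec 2 -> R) a b l :
  partial g iy (pt a b) l -> is_derive (fun t => g (pt a t)) b l.
Proof.
move/is_derive_Reals => Hg; apply: is_derive_shift_origin.
by apply: is_derive_ext Hg => h; rewrite shift_pt_y.
Qed.

Lemma locally_2d_open {O : vec 2 -> Prop} {w} :
  open_in O -> O w -> locally_2d (fun a b => O (pt a b)) (w ix) (w iy).
Proof.
move=> HO Hw; case: (HO w Hw) => d [Hd Hball]; exists (mkposreal d Hd) => a b Ha Hb /=.
by apply: Hball => j; case: (ord2P j) => ->; rewrite Rabs_minus_sym.
Qed.

Lemma continuity_2d_pt_of_continuous_in {O : vec 2 -> Prop} {g w} :
  continuous_in O g -> O w ->
  continuity_2d_pt (fun a b => g (pt a b)) (w ix) (w iy).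
Proof.
move=> Hg Hw [e He]; case: (Hg w Hw e He) => d [Hd Hc].
exists (mkposreal d Hd) => a b Ha Hb /=; rewrite pt_eta.
by apply: Hc => j; case: (ord2P j) => ->; rewrite Rabs_minus_sym.
Qed.

Section Schwarz2d.
Variables (f fx fy fxy fyx : R -> R -> R).

Definition partials_2d u v :=
  [/\ is_derive (fun t => f t v) u (fx u v), is_derive (fun t => f u t) v (fy u v),
      is_derive (fun t => fy t v) u (fyx u v) & is_derive (fun t => fx u t) v (fxy u v)].

Lemma is_derive_Derive_y {u v} : locally_2d partials_2d u v ->
  is_derive (fun s => Derive (fun t => f s t) v) u (fyx u v).
Proof.
move=> Hloc; have [_ _ Hyx _] := locally_2d_singleton _ _ _ Hloc.
apply: is_derive_ext_loc Hyx; apply: filter_imp (locally_2d_1d_const_y _ _ _ Hloc).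
by move=> s [_ Hy _ _]; rewrite (is_derive_unique _ _ _ Hy).
Qed.

Lemma is_derive_Derive_x {u v} : locally_2d partials_2d u v ->
  is_derive (fun s => Derive (fun t => f t s) u) v (fxy u v).
Proof.
move=> Hloc; have [_ _ _ Hxy] := locally_2d_singleton _ _ _ Hloc.
apply: is_derive_ext_loc Hxy; apply: filter_imp (locally_2d_1d_const_x _ _ _ Hloc).
by move=> s [Hx _ _ _]; rewrite (is_derive_unique _ _ _ Hx).
Qed.

Lemma schwarz_2d x y : locally_2d partials_2d x y ->
  continuity_2d_pt fxy x y -> continuity_2d_pt fyx x y -> fxy x y = fyx x y.
Proof.
move=> Hloc Hcxy Hcyx.
have Lyx : locally_2d (fun u v => fyx u v = Derive (fun s => Derive (fun t => f s t) v) u) x y.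
  apply: locally_2d_impl_strong (Hloc); apply: locally_2d_forall => u v Huv.
  by rewrite (is_derive_unique _ _ _ (is_derive_Derive_y Huv)).
have Lxy : locally_2d (fun u v => fxy u v = Derive (fun s => Derive (fun t => f t s) u) v) x y.
  apply: locally_2d_impl_strong (Hloc); apply: locally_2d_forall => u v Huv.
  by rewrite (is_derive_unique _ _ _ (is_derive_Derive_x Huv)).
rewrite (locally_2d_singleton _ _ _ Lyx) (locally_2d_singleton _ _ _ Lxy).
symmetry; apply: Schwarz.
- apply: locally_2d_impl_strong (Hloc); apply: locally_2d_forall => u v Huv.
  have [Hx Hy _ _] := locally_2d_singleton _ _ _ Huv.
  split; [|split; [|split]]; eexists;
    by [exact: Hx | exact: Hy | exact: is_derive_Derive_y | exact: is_derive_Derive_x].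
- exact: continuity_2d_pt_ext_loc Lyx Hcyx.
- exact: continuity_2d_pt_ext_loc Lxy Hcxy.
Qed.

End Schwarz2d.

Lemma C2_on_hessian_sym {O : vec 2 -> Prop} {z Dz D2z w} :
  C2_on O z Dz D2z -> O w -> D2z ix iy w = D2z iy ix w.
Proof.
move=> [HO [H1 [H2 [_ [_ Hc2]]]]] Hw; rewrite -[w]pt_eta.
apply: (@schwarz_2d (fun a b => z (pt a b)) (fun a b => Dz ix (pt a b)) (fun a b => Dz iy (pt a b))
  (fun a b => D2z ix iy (pt a b)) (fun a b => D2z iy ix (pt a b))).
- apply: locally_2d_impl (locally_2d_open HO Hw).
  apply: locally_2d_forall => a b Hab.
  split; [apply: partial_pt_x | apply: partial_pt_y | apply: partial_pt_x | apply: partial_pt_y];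
    by [apply: H1 | apply: H2].
- exact: continuity_2d_pt_of_continuous_in.
- exact: continuity_2d_pt_of_continuous_in.
Qed.

Lemma partial_plus {n} (f g : vec n -> R) i x lf lg :
  partial f i x lf -> partial g i x lg -> partial (fun w => f w + g w) i x (lf + lg).
Proof. exact: derivable_pt_lim_plus. Qed.

Lemma hessian_at_plus {n} {f g : vec n -> R} {x Hf Hg} :
  hessian_at f x Hf -> hessian_at g x Hg ->
  hessian_at (fun w => f w + g w) x (fun i j => Hf i j + Hg i j).
Proof.
move=> [Gf [df [Hdf [Hf1 Hf2]]]] [Gg [dg [Hdg [Hg1 Hg2]]]].
exists (fun i y => Gf i y + Gg i y), (Rmin df dg); split; first exact: Rmin_pos.
split=> [y Hy i | i j]; last exact: partial_plus.
by apply: partial_plus; [apply: Hf1 | apply: Hg1]; apply: dist_lt_le Hy _;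
  [apply: Rmin_l | apply: Rmin_r].
Qed.

Lemma C2_on_hessian_at {n} {O : vec n -> Prop} {z Dz D2z w} :
  C2_on O z Dz D2z -> O w -> hessian_at z w (fun i j => D2z i j w).
Proof.
move=> [HO [H1 [H2 _]]] Hw; case: (HO w Hw) => d [Hd Hball].
exists Dz, d; split=> //; split=> [y Hy i | i j]; [apply: H1; exact: Hball | exact: H2].
Qed.

Definition quad2 (p q : R) (w : vec 2) : R := p / 2 * w ix ^ 2 + q / 2 * w iy ^ 2.

Definition quad2_grad (p q : R) (i : 'I_2) (w : vec 2) : R :=
  if i == ix then p * w ix else q * w iy.

Definition quad2_hess (p q : R) (i j : 'I_2) : R :=
  if i == j then (if i == ix then p else q) else 0.

Lemma hessian_at_quad2 p q x : hessian_at (quad2 p q) x (quad2_hess p q).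
Proof.
exists (quad2_grad p q), 1; split; first lra.
split=> [y _ i | i j]; apply/is_derive_Reals;
  [case: (ord2P i) => -> | case: (ord2P i) => ->; case: (ord2P j) => ->];
  rewrite /quad2 /quad2_grad /quad2_hess /shift /=; auto_derive => //; field.
Qed.

Lemma qform2_add_quad2_hess H p q u v :
  qform2 (fun i j => H i j + quad2_hess p q i j) u v = qform2 H u v + p * u ^ 2 + q * v ^ 2.
Proof. rewrite /qform2 /quad2_hess /=; ring. Qed.

Lemma qform2_sym (H : 'I_2 -> 'I_2 -> R) u v : H ix iy = H iy ix ->
  qform2 H u v = H ix ix * u ^ 2 + 2 * H ix iy * u * v + H iy iy * v ^ 2.
Proof. by rewrite /qform2 => <-; ring. Qed.

Lemma binary_form_bound {M a b c : R} (u v : R) :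
  Rabs a <= M -> Rabs b <= M -> Rabs c <= M ->
  Rabs (c * u ^ 2 - 2 * b * u * v + a * v ^ 2) <= 2 * M * (u ^ 2 + v ^ 2).
Proof.
move=> Ha Hb Hc.
have Huv : 2 * Rabs (u * v) <= u ^ 2 + v ^ 2.
  rewrite Rabs_mult; have := pow2_ge_0 (Rabs u - Rabs v).
  rewrite -(pow2_abs u) -(pow2_abs v); lra.
have Hu := pow2_ge_0 u; have Hv := pow2_ge_0 v; have Huv0 := Rabs_pos (u * v).
split_Rabs; nra.
Qed.

Lemma perturbed_form_pos {eps} (M : R) {k a b c h11 h12 h22 u v : R} :
  eps = 1 \/ eps = -1 -> Rabs a <= M -> Rabs b <= M -> Rabs c <= M -> 2 * M <= k ->
  eps * ((h11 + c) * u ^ 2 + 2 * (h12 - b) * u * v + (h22 + a) * v ^ 2) > 0 ->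
  eps * (h11 * u ^ 2 + 2 * h12 * u * v + h22 * v ^ 2 + eps * k * u ^ 2 + eps * k * v ^ 2) > 0.
Proof.
move=> Heps Ha Hb Hc Hk Hpos.
have := binary_form_bound u v Ha Hb Hc.
have : 2 * M * (u ^ 2 + v ^ 2) <= k * (u ^ 2 + v ^ 2).
  by apply: Rmult_le_compat_r => //; have := pow2_ge_0 u; have := pow2_ge_0 v; lra.
by case: Heps => -> in Hpos *; split_Rabs; lra.
Qed.

Theorem mainTheorem7
  (Omega : vec 2 -> Prop) (U : vec 5 -> Prop)
  (A B C E : vec 5 -> R)
  (z : vec 2 -> R) (Dz : 'I_2 -> vec 2 -> R) (D2z : 'I_2 -> 'I_2 -> vec 2 -> R)
  (eps : R) :
  domain Omega ->
  open_in U ->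
  is_C2_on U A -> is_C2_on U B -> is_C2_on U C -> is_C2_on U E ->
  (forall P, U P -> A P * C P - B P ^ 2 + E P > 0) ->
  C2_on Omega z Dz D2z ->
  let jet := fun w : vec 2 => mk5 (w ix) (w iy) (z w) (Dz ix w) (Dz iy w) in
  (forall w, Omega w ->
     A (jet w) * D2z ix ix w + 2 * B (jet w) * D2z ix iy w + C (jet w) * D2z iy iy w
     + D2z ix ix w * D2z iy iy w - (D2z ix iy w) ^ 2 = E (jet w)) ->
  (let S := fun P : vec 5 => exists w, Omega w /\ forall i, P i = jet w i in
   compact_in (closure_in S) /\ (forall P, closure_in S P -> U P)) ->
  (eps = 1 \/ eps = -1) ->
  (forall w, Omega w -> forall u v : R, (u <> 0 \/ v <> 0) ->
     eps * ((D2z ix ix w + C (jet w)) * u ^ 2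
            + 2 * (D2z ix iy w - B (jet w)) * u * v
            + (D2z iy iy w + A (jet w)) * v ^ 2) > 0) ->
  exists a c : R, 0 < a /\ 0 < c /\
    let zs := fun w : vec 2 => z w + eps * a / 2 * (w ix) ^ 2 + eps * c / 2 * (w iy) ^ 2 in
    forall w, Omega w -> exists H, hessian_at zs w H /\
      forall u v : R, (u <> 0 \/ v <> 0) -> eps * qform2 H u v > 0.
Proof.
move=> _ _ HA HB HC _ _ Hz jet _ [Hcomp Hsub] Heps Hpos.
have [MA [MA0 HMA]] := continuous_bounded_on_compact (is_C2_on_continuous HA) Hcomp Hsub.
have [MB [MB0 HMB]] := continuous_bounded_on_compact (is_C2_on_continuous HB) Hcomp Hsub.
have [MC [MC0 HMC]] := continuous_bounded_on_compact (is_C2_on_continuous HC) Hcomp Hsub.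
pose k := 2 * (MA + MB + MC) + 1.
have Hk : 0 < k by rewrite /k; lra.
exists k, k; do 2!split=> //.
move=> zs w Hw.
have -> : zs = fun w => z w + quad2 (eps * k) (eps * k) w.
  by apply: functional_extensionality => w'; rewrite /zs /quad2; ring.
exists (fun i j => D2z i j w + quad2_hess (eps * k) (eps * k) i j); split.
  exact: hessian_at_plus (C2_on_hessian_at Hz Hw) (hessian_at_quad2 _ _ _).
move=> u v Huv.
have Hjet : closure_in (fun P => exists w, Omega w /\ forall i, P i = jet w i) (jet w).
  by apply: closure_in_self; exists w.
rewrite qform2_add_quad2_hess.
rewrite (@qform2_sym (fun i j => D2z i j w) u v (C2_on_hessian_sym Hz Hw)).
apply: (perturbed_form_pos (MA + MB + MC) Heps _ _ _ _ (Hpos w Hw u v Huv));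
  [have := HMA _ Hjet | have := HMB _ Hjet | have := HMC _ Hjet | rewrite /k]; lra.
Qed.
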